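(* Let $\mathcal G$ be the group of unitaries on $n$ qubits generated by $\{P_i, Z_{\{i,j\}}, X_{[ij]}\mid 0\le i,j\le n-1,\ i\ne j\}$, let $\mathcal N$ be its subgroup generated by $\{P_i,Z_{\{i,j\}}\}$ and $\mathcal X$ its subgroup generated by $\{X_{[ij]}\}$. Then every element of $\mathcal G$ admits a unique decomposition of the form $$Z_{\mathbf v}\,P_{\mathbf b}\,Z_{\mathbf B}\,X_{\mathbf A},$$ with $\mathbf v,\mathbf b\in\mathbb F_2^n$, $\mathbf B\in\mathcal B_n$, $\mathbf A\in GL_n(\mathbb F_2)$. Moreover $\mathcal G=\mathcal N\rtimes\mathcal X$ is the semidirect product of its normal subgroup $\mathcal N$ with $\mathcal X$, and the order of $\mathcal G$ is $2^{n(n+1)}\prod_{i=1}^n(2^i-1)$.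
   Context: Qubits are labelled $0,\dots,n-1$; the computational basis of $(\mathbb C^2)^{\otimes n}$ is $\{|x\rangle : x\in\mathbb F_2^n\}$, $\mathrm{i}=\sqrt{-1}$. $P_i$ is the phase gate $\mathrm{diag}(1,\mathrm{i})$ on qubit $i$; for $\mathbf b\in\mathbb F_2^n$, $P_{\mathbf b}=\prod_iP_i^{b_i}$, so $P_{\mathbf b}|x\rangle=\mathrm{i}^{\sum_ib_ix_i}|x\rangle$ (integer sum). $Z_{\mathbf v}|x\rangle=(-1)^{\sum_iv_ix_i}|x\rangle$. For $\mathbf A\in GL_n(\mathbb F_2)$, $X_{\mathbf A}|x\rangle=|\mathbf Ax\rangle$; for $i\ne j$, $[ij]=\mathbf I+\mathbf E_{ij}$ ($\mathbf E_{ij}$ having a single 1 at entry $(i,j)$) and $X_{[ij]}$ is the CNOT gate with target $i$ and control $j$. $\mathcal B_n$ is the set of symmetric $n\times n$ matrices over $\mathbb F_2$ with zero diagonal; for $\mathbf B\in\mathcal B_n$, $Z_{\mathbf B}|x\rangle=(-1)^{\sum_{i<j}b_{ij}x_ix_j}|x\rangle$, and $Z_{\{i,j\}}$ is the CZ gate, i.e. $Z_{\mathbf B}$ for the matrix $\mathbf B$ whose only ones are at entries $(i,j)$ and $(j,i)$. *)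

From HB Require Import structures.
From mathcomp Require Import all_boot all_order all_algebra all_field.
Set Implicit Arguments. Unset Strict Implicit. Unset Printing Implicit Defensive.
Import Order.TTheory GRing.Theory Num.Theory.
Local Open Scope ring_scope.

(* Computational basis labels: x in F_2^n, as column vectors. *)
Definition bits (n : nat) := 'cV['F_2]_n.

(* Index set of the computational basis; operators on (C^2)^{\otimes n}
   are matrices indexed by 'I_#|bits n|, basis index k <-> enum_val k. *)
Definition dim (n : nat) := #|{: bits n}|.
Definition op_t (n : nat) := 'M[algC]_(dim n).

Definition bit (n : nat) (x : bits n) (i : 'I_n) : nat := val (x i ord0).

(* The monomial operator |x> |-> c x |f x>. *)
Definition monop (n : nat) (f : bits n -> bits n) (c : bits n -> algC) : op_t n :=
  \matrix_(k, l) (if enum_val k == f (enum_val l) then c (enum_val l) else 0).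

(* P_b |x> = i^{sum_i b_i x_i} |x>  (integer sum) *)
Definition Pgate (n : nat) (b : bits n) : op_t n :=
  monop id (fun x => 'i ^+ (\sum_(i < n) bit b i * bit x i)%N).

Definition Zgate (n : nat) (v : bits n) : op_t n :=
  monop id (fun x => (-1) ^+ (\sum_(i < n) bit v i * bit x i)%N).

Definition Bset (n : nat) (B : 'M['F_2]_n) : Prop :=
  B^T = B /\ forall i, B i i = 0.

Definition ZBgate (n : nat) (B : 'M['F_2]_n) : op_t n :=
  monop id (fun x => (-1) ^+ (\sum_(i < n) \sum_(j < n | (i < j)%N)
                                 val (B i j) * bit x i * bit x j)%N).

Definition Xgate (n : nat) (A : 'M['F_2]_n) : op_t n :=
  monop (fun x => A *m x) (fun _ => 1).

Definition Pi (n : nat) (i : 'I_n) : op_t n := Pgate (delta_mx i ord0).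
Definition CZ (n : nat) (i j : 'I_n) : op_t n := ZBgate (delta_mx i j + delta_mx j i).
Definition CNOT (n : nat) (i j : 'I_n) : op_t n := Xgate (1%:M + delta_mx i j).

Inductive gen (n : nat) (S : op_t n -> Prop) : op_t n -> Prop :=
| gen_one : gen S 1%:M
| gen_base U : S U -> gen S U
| gen_mul U V : gen S U -> gen S V -> gen S (U *m V)
| gen_inv U : gen S U -> gen S (invmx U).

Definition Gens (n : nat) (U : op_t n) : Prop :=
  (exists i, U = Pi i) \/ (exists i j, i != j /\ U = CZ i j) \/
  (exists i j, i != j /\ U = CNOT i j).
Definition NGens (n : nat) (U : op_t n) : Prop :=
  (exists i, U = Pi i) \/ (exists i j, i != j /\ U = CZ i j).
Definition XGens (n : nat) (U : op_t n) : Prop :=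
  exists i j, i != j /\ U = CNOT i j.

Definition Ggrp (n : nat) := gen (@Gens n).
Definition Ngrp (n : nat) := gen (@NGens n).
Definition Xgrp (n : nat) := gen (@XGens n).

Definition semidirect (n : nat) (G N X : op_t n -> Prop) : Prop :=
  [/\ (forall U, N U -> G U), (forall U, X U -> G U),
      (forall g U, G g -> N U -> N (invmx g *m U *m g)),
      (forall U, N U -> X U -> U = 1%:M)
    & (forall g, G g -> exists U V, [/\ N U, X V & g = U *m V])].

From HB Require Import structures.
From mathcomp Require Import all_boot all_order all_algebra all_field.
From mathcomp Require Import ring zify.
Import Order.TTheory GRing.Theory Num.Theory.
Local Open Scope ring_scope.
Set Implicit Arguments. Unset Strict Implicit. Unset Printing Implicit Defensive.

(* Every generator, hence every element of G, is a monomial operator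
   |x> |-> c(x) |Ax> with A invertible and c a quadratic phase: c(0) = 1 and
   c(x + y) = c(x) c(y) (-1)^(x^T M y) for a symmetric M over F_2, a class
   closed under products and inverses.  The phase of Z_v P_b Z_B is the
   quadratic phase whose form has diagonal b and off-diagonal part B; conversely
   a quadratic phase determines its form, hence b and B, and then v through its
   values on the basis vectors.  So the elements of G are exactly the pairwise
   distinct Z_v P_b Z_B X_A, those of N are the ones with A = 1, and those of X
   are the X_A, because GL_n(F_2) is generated by the transvections [ij]
   (Gaussian elimination).  Normality of N follows since conjugating a diagonal
   quadratic phase by a monomial operator gives again a diagonal quadratic phase,
   and counting the normal forms gives 2^n 2^n 2^C(n,2) |GL_n(F_2)|. *)

Lemma F2P (a : 'F_2) : a = 0 \/ a = 1.
Proof. by case: a => [[|[|k]] Hk] //; [left|right]; apply/eqP. Qed.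

Lemma addF2xx (a : 'F_2) : a + a = 0.
Proof. exact: (addrr_pchar2 (pchar_Fp (isT : prime 2))). Qed.

Definition sgn (a : 'F_2) : algC := (-1) ^+ val a.

Lemma sgn0 : sgn 0 = 1. Proof. by []. Qed.

Lemma sgn1 : sgn 1 = -1. Proof. exact: expr1. Qed.

Lemma sgnD a b : sgn (a + b) = sgn a * sgn b.
Proof.
case: (F2P a) => ->; first by rewrite add0r sgn0 mul1r.
case: (F2P b) => ->; first by rewrite addr0 sgn0 mulr1.
by rewrite addF2xx sgn0 sgn1 mulrNN mulr1.
Qed.

Lemma sgn_sum (I : Type) (r : seq I) (P : pred I) (F : I -> 'F_2) :
  sgn (\sum_(i <- r | P i) F i) = \prod_(i <- r | P i) sgn (F i).
Proof. exact: (big_morph _ sgnD sgn0). Qed.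

Lemma sgnK a : sgn a * sgn a = 1.
Proof. by rewrite -sgnD addF2xx. Qed.

Lemma sgn_inj : injective sgn.
Proof.
have N1_neq1 : (-1 : algC) != 1.
  by rewrite -subr_eq0 -opprD oppr_eq0 -(natrD _ 1 1) pnatr_eq0.
move=> a b; case: (F2P a) => ->; case: (F2P b) => -> //; rewrite sgn0 sgn1 => /eqP.
  by rewrite eq_sym (negbTE N1_neq1).
by rewrite (negbTE N1_neq1).
Qed.

Lemma expN1_sgn (k : nat) : (-1) ^+ k = sgn k%:R :> algC.
Proof. by elim: k => [//|k IH]; rewrite exprS IH mulrS sgnD sgn1 mulN1r. Qed.

Section MonomialOperators.
Variable n : nat.
Implicit Types (f g : bits n -> bits n) (c d : bits n -> algC) (A : 'M['F_2]_n).

Lemma eq_monop f f' c c' : f =1 f' -> c =1 c' -> monop f c = monop f' c'.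
Proof. by move=> ef ec; apply/matrixP => k l; rewrite !mxE ef ec. Qed.

Lemma monop_mul f g c d :
  monop f c *m monop g d = monop (f \o g) (fun x => c (g x) * d x).
Proof.
apply/matrixP => k l; rewrite !mxE (bigD1 (enum_rank (g (enum_val l)))) //=.
rewrite big1 ?addr0 => [|m /negbTE Hm]; rewrite !mxE.
  by rewrite enum_rankK eqxx; case: ifP; rewrite ?mul0r.
suff -> : (enum_val m == g (enum_val l)) = false by rewrite mulr0.
by apply: contraFF Hm => /eqP <-; rewrite enum_valK.
Qed.

Lemma monop1 : monop id (fun _ => 1) = 1%:M :> op_t n.
Proof. by apply/matrixP => k l; rewrite !mxE /= (inj_eq enum_val_inj); case: eqP. Qed.

Lemma monop_inj f f' c c' : (forall x, c x != 0) ->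
  monop f c = monop f' c' -> forall x, f x = f' x /\ c x = c' x.
Proof.
move=> c_neq0 E x.
have := congr1 (fun M : op_t n => M (enum_rank (f x)) (enum_rank x)) E.
rewrite /= !mxE !enum_rankK eqxx.
by case: eqP => [<- -> //|_ cx0]; move: (c_neq0 x); rewrite cx0 eqxx.
Qed.

Lemma monop_linM A A' c c' : monop (mulmx A) c *m monop (mulmx A') c' =
  monop (mulmx (A *m A')) (fun x => c (A' *m x) * c' x).
Proof. by rewrite monop_mul; apply: eq_monop => x //=; rewrite mulmxA. Qed.

Lemma monop_lin1 c : monop (mulmx 1%:M) c = monop id c.
Proof. by apply: eq_monop => x //=; rewrite mul1mx. Qed.

Lemma invmx_monop_lin A c : A \in unitmx -> (forall x, c x != 0) ->
  invmx (monop (mulmx A) c) =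
  monop (mulmx (invmx A)) (fun x => (c (invmx A *m x))^-1).
Proof.
move=> uA c_neq0.
have E : monop (mulmx A) c *m monop (mulmx (invmx A)) (fun x => (c (invmx A *m x))^-1)
         = 1%:M.
  by rewrite monop_linM mulmxV // monop_lin1 -monop1; apply: eq_monop => x //=; rewrite mulfV.
by rewrite -[RHS]mul1mx -(mulVmx (proj1 (mulmx1_unit E))) -mulmxA E mulmx1.
Qed.

End MonomialOperators.

Section QuadraticPhases.
Variable n : nat.
Implicit Types (x y : bits n) (A M N : 'M['F_2]_n) (c d : bits n -> algC).

Lemma addbitsxx x : x + x = 0.
Proof. by apply/matrixP => i j; rewrite !mxE addF2xx. Qed.

Definition basis (i : 'I_n) : bits n := delta_mx i ord0.

Lemma basisE i k : basis i k ord0 = (k == i)%:R.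
Proof. by rewrite mxE eqxx andbT. Qed.

Definition bform M x y : 'F_2 := (x^T *m M *m y) ord0 ord0.

Lemma bformE M x y : bform M x y = \sum_i \sum_j x i ord0 * M i j * y j ord0.
Proof.
rewrite /bform mxE [RHS]exchange_big; apply: eq_bigr => j _; rewrite mxE mulr_suml.
by apply: eq_bigr => i _; rewrite mxE.
Qed.

Lemma bform_basis M i j : bform M (basis i) (basis j) = M i j.
Proof. by rewrite /bform /basis trmx_delta -rowE -colE !mxE. Qed.

Lemma bformDl M N x y : bform (M + N) x y = bform M x y + bform N x y.
Proof. by rewrite /bform mulmxDr mulmxDl mxE. Qed.

Definition quad_phase c M : Prop :=
  c 0 = 1 /\ forall x y, c (x + y) = c x * c y * sgn (bform M x y).

Lemma quad_phase_neq0 c M : quad_phase c M -> forall x, c x != 0.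
Proof.
move=> [c0 cD] x; apply: contra_eq_neq (cD x x) => cx0.
by rewrite addbitsxx c0 cx0 !mul0r oner_neq0.
Qed.

Lemma quad_phase1 : quad_phase (fun _ => 1) 0.
Proof. by split=> // x y; rewrite /bform mulmx0 mul0mx mxE sgn0 !mulr1. Qed.

Lemma quad_phaseM c d M N :
  quad_phase c M -> quad_phase d N -> quad_phase (fun x => c x * d x) (M + N).
Proof.
move=> [c0 cD] [d0 dD]; split=> [|x y]; first by rewrite c0 d0 mulr1.
by rewrite cD dD bformDl sgnD; ring.
Qed.

Lemma quad_phaseV c M : quad_phase c M -> quad_phase (fun x => (c x)^-1) M.
Proof.
move=> [c0 cD]; split=> [|x y]; first by rewrite c0 invr1.
rewrite cD !invfM; congr (_ * _).
by case: (F2P (bform M x y)) => ->; rewrite ?sgn0 ?sgn1 ?invr1 ?invrN ?invr1.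
Qed.

Lemma quad_phase_lin c M A :
  quad_phase c M -> quad_phase (fun x => c (A *m x)) (A^T *m M *m A).
Proof.
move=> [c0 cD]; split=> [|x y]; first by rewrite mulmx0.
by rewrite mulmxDr cD /bform trmx_mul !mulmxA.
Qed.

Lemma quad_phase_basis_eq c d M : quad_phase c M -> quad_phase d M ->
  (forall i, c (basis i) = d (basis i)) -> c =1 d.
Proof.
move=> [c0 cD] [d0 dD] eq_cd x.
have -> : x = \sum_i x i ord0 *: basis i.
  by rewrite {1}[x]matrix_sum_delta; apply: eq_bigr => i _; rewrite big_ord1.
elim/big_rec: _ => [|i y _ IH]; first by rewrite c0 d0.
rewrite cD dD IH; congr (_ * _ * _).
by case: (F2P (x i ord0)) => ->; rewrite ?scale0r ?c0 ?d0 ?scale1r ?eq_cd.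
Qed.

Lemma quad_phase_form_uniq c d M N :
  c =1 d -> quad_phase c M -> quad_phase d N -> M = N.
Proof.
move=> eq_cd Qc [_ dD]; have c_neq0 := quad_phase_neq0 Qc; have [_ cD] := Qc.
apply/matrixP => i j; rewrite -!(bform_basis _ i j); apply: sgn_inj.
have := cD (basis i) (basis j); rewrite !eq_cd dD -!eq_cd => /mulfI -> //.
by rewrite mulf_neq0.
Qed.

Lemma quad_phase_basis_sq c M i : quad_phase c M -> c (basis i) ^+ 2 = sgn (M i i).
Proof.
move=> [c0 cD]; have := cD (basis i) (basis i).
rewrite addbitsxx c0 bform_basis => /(congr1 ( *%R^~ (sgn (M i i)))).
by rewrite mul1r -mulrA sgnK mulr1 expr2.
Qed.

End QuadraticPhases.

Lemma sum_offdiag (R : nmodType) m (F : 'I_m -> 'I_m -> R) : (forall i, F i i = 0) ->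
  \sum_i \sum_j F i j = \sum_(i < m) \sum_(j < m | (i < j)%N) (F i j + F j i).
Proof.
move=> F0; under [RHS]eq_bigr do rewrite big_split.
rewrite big_split /= [X in _ = _ + X](exchange_big_dep xpredT) //= -big_split.
apply: eq_bigr => i _; rewrite (bigID (fun j : 'I_m => (i < j)%N)) /=; congr (_ + _).
rewrite (bigD1 i) ?ltnn //= F0 add0r; apply: eq_bigl => j.
by rewrite -leqNgt ltn_neqAle andbC.
Qed.

Lemma imag_pow_bitD (a u w : 'F_2) :
  'i ^+ (val a * val (u + w)) =
  'i ^+ (val a * val u) * 'i ^+ (val a * val w) * sgn (u * a * w) :> algC.
Proof.
case: (F2P a) => ->; first by rewrite !mulr0 mul0r sgn0 !mulr1.
case: (F2P u) => ->; first by rewrite !add0r !mul0r sgn0 mul1r mulr1.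
case: (F2P w) => ->; first by rewrite !addr0 !mulr0 sgn0 !mulr1.
by rewrite addF2xx !mulr1 sgn1 /= expr0 expr1 mulrN1 -expr2 sqrCi opprK.
Qed.

Section GatePhases.
Variable n : nat.
Implicit Types (x y v b : bits n) (B : 'M['F_2]_n).

Definition Zph v x : algC := (-1) ^+ (\sum_(i < n) bit v i * bit x i)%N.
Definition Pph b x : algC := 'i ^+ (\sum_(i < n) bit b i * bit x i)%N.
Definition ZBph B x : algC :=
  (-1) ^+ (\sum_(i < n) \sum_(j < n | (i < j)%N) val (B i j) * bit x i * bit x j)%N.

Lemma ZgateE v : Zgate v = monop id (Zph v). Proof. by []. Qed.
Lemma PgateE b : Pgate b = monop id (Pph b). Proof. by []. Qed.
Lemma ZBgateE B : ZBgate B = monop id (ZBph B). Proof. by []. Qed.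

Definition qform B x : 'F_2 :=
  \sum_(i < n) \sum_(j < n | (i < j)%N) B i j * x i ord0 * x j ord0.

Lemma Zph_sgn v x : Zph v x = sgn (\sum_i v i ord0 * x i ord0).
Proof.
rewrite /Zph expN1_sgn natr_sum; congr sgn; apply: eq_bigr => i _.
by rewrite natrM !natr_Zp.
Qed.

Lemma ZBph_sgn B x : ZBph B x = sgn (qform B x).
Proof.
rewrite /ZBph expN1_sgn natr_sum; congr sgn; apply: eq_bigr => i _.
by rewrite natr_sum; apply: eq_bigr => j _; rewrite !natrM !natr_Zp.
Qed.

Lemma Pph_prod b x : Pph b x = \prod_i 'i ^+ (bit b i * bit x i).
Proof. exact: (big_morph _ (exprD _) (expr0 _)). Qed.

Lemma quad_phase_Z v : quad_phase (Zph v) 0.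
Proof.
split=> [|x y]; first by rewrite Zph_sgn big1 // => i _; rewrite mxE mulr0.
rewrite !Zph_sgn /bform mulmx0 mul0mx mxE sgn0 mulr1 -sgnD -big_split.
by congr sgn; apply: eq_bigr => i _; rewrite mxE mulrDr.
Qed.

Lemma quad_phase_P b : quad_phase (Pph b) (diag_mx b^T).
Proof.
split=> [|x y]; first by rewrite Pph_prod big1 // => i _; rewrite /bit mxE muln0.
have -> : bform (diag_mx b^T) x y = \sum_i x i ord0 * b i ord0 * y i ord0.
  by rewrite /bform mul_mx_diag mxE; apply: eq_bigr => i _; rewrite !mxE.
rewrite !Pph_prod sgn_sum -!big_split /=; apply: eq_bigr => i _.
by rewrite /bit mxE imag_pow_bitD.
Qed.

Lemma Bset_sym B : Bset B -> forall i j, B j i = B i j.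
Proof. by move=> [Bt _] i j; rewrite -{1}Bt mxE. Qed.

Lemma qformD B x y : Bset B -> qform B (x + y) = qform B x + qform B y + bform B x y.
Proof.
move=> HB; rewrite bformE sum_offdiag => [|i]; last by rewrite HB.2 mulr0 mul0r.
rewrite /qform -!big_split; apply: eq_bigr => i _; rewrite -!big_split /=.
by apply: eq_bigr => j _; rewrite !mxE (Bset_sym HB i j); ring.
Qed.

Lemma quad_phase_ZB B : Bset B -> quad_phase (ZBph B) B.
Proof.
move=> HB; split=> [|x y]; last by rewrite !ZBph_sgn qformD // !sgnD.
by rewrite ZBph_sgn /qform big1 // => i _; rewrite big1 // => j _; rewrite !mxE mulr0.
Qed.

Lemma Zph_basis v i : Zph v (basis i) = sgn (v i ord0).
Proof.
rewrite Zph_sgn (bigD1 i) //= big1 ?addr0 => [|j /negbTE ji]; rewrite basisE ?ji ?mulr0 //.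
by rewrite eqxx mulr1.
Qed.

Lemma bit_basis (i k : 'I_n) : bit (basis i) k = (k == i) :> nat.
Proof. by rewrite /bit basisE; case: eqP. Qed.

Lemma Pph_basis b i : Pph b (basis i) = 'i ^+ bit b i.
Proof.
rewrite Pph_prod (bigD1 i) //= big1 ?mulr1 => [|j /negbTE ji]; rewrite bit_basis ?ji ?muln0 //.
by rewrite eqxx muln1.
Qed.

Lemma Pph_basis_l i x : Pph (basis i) x = 'i ^+ bit x i.
Proof.
rewrite /Pph (bigD1 i) //= big1 ?addn0 => [|j /negbTE ji]; rewrite bit_basis ?ji //.
by rewrite eqxx mul1n.
Qed.

Lemma ZBph_basis B i : ZBph B (basis i) = 1.
Proof.
rewrite ZBph_sgn /qform big1 ?sgn0 // => k _; rewrite big1 // => l lt_kl.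
rewrite !basisE; case: (eqVneq k i) => [ki|]; last by rewrite mulr0 mul0r.
by case: (eqVneq l i) => [li|]; [move: lt_kl; rewrite ki li ltnn | rewrite mulr0].
Qed.

End GatePhases.

Lemma imag_pow_bit_sq (a : 'F_2) : ('i ^+ val a) ^+ 2 = sgn a :> algC.
Proof. by case: (F2P a) => ->; rewrite ?expr1n // sgn1 /= expr1 sqrCi. Qed.

Section PhaseNormalForm.
Variable n : nat.
Implicit Types (x v b : bits n) (B M : 'M['F_2]_n) (c : bits n -> algC).

Definition phase v b B x := Zph v x * Pph b x * ZBph B x.

Lemma quad_phase_phase v b B : Bset B -> quad_phase (phase v b B) (diag_mx b^T + B).
Proof.
move=> HB; rewrite -[diag_mx _]add0r.
apply: quad_phaseM (quad_phase_ZB HB).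
exact: quad_phaseM (quad_phase_Z v) (quad_phase_P b).
Qed.

Lemma phase_basis v b B i : phase v b B (basis i) = sgn (v i ord0) * 'i ^+ bit b i.
Proof. by rewrite /phase Zph_basis Pph_basis ZBph_basis mulr1. Qed.

Lemma quad_phase_normal_form c M : M^T = M -> quad_phase c M ->
  exists v b B, Bset B /\ c =1 phase v b B.
Proof.
move=> Mt Qc.
pose b : bits n := \col_i M i i.
pose B : 'M['F_2]_n := \matrix_(i, j) if i == j then 0 else M i j.
pose v : bits n := \col_i (if c (basis i) == 'i ^+ bit b i then 0 else 1).
have HB : Bset B.
  split=> [|i]; last by rewrite mxE eqxx.
  apply/matrixP => i j; rewrite !mxE eq_sym; case: eqP => // _.
  by rewrite -{1}Mt mxE.
have M_eq : diag_mx b^T + B = M.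
  apply/matrixP => i j; rewrite !mxE; case: eqP => [->|_]; first by rewrite addr0.
  by rewrite mulr0n add0r.
exists v, b, B; split=> //.
have Qphase := quad_phase_phase v b HB; rewrite M_eq in Qphase.
apply: (quad_phase_basis_eq Qc Qphase) => i; rewrite phase_basis.
have sq_eq : c (basis i) ^+ 2 = ('i ^+ bit b i) ^+ 2.
  by rewrite (quad_phase_basis_sq _ Qc) /bit mxE imag_pow_bit_sq.
have : (c (basis i) - 'i ^+ bit b i) * (c (basis i) + 'i ^+ bit b i) == 0.
  by rewrite -subr_sqr sq_eq subrr.
rewrite mulf_eq0 subr_eq0 addr_eq0 mxE => /orP [/eqP ->|/eqP ->].
  by rewrite eqxx sgn0 mul1r.
case: ifP => [/eqP E|_]; first by rewrite sgn0 mul1r E.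
by rewrite sgn1 mulN1r.
Qed.

Lemma diag_add_offdiag_inj b b' B B' : Bset B -> Bset B' ->
  diag_mx b^T + B = diag_mx b'^T + B' -> b' = b /\ B' = B.
Proof.
move=> HB HB' /matrixP E; split; apply/matrixP => i j.
  by rewrite !ord1; have := E i i; rewrite !mxE eqxx !mulr1n HB.2 HB'.2 !addr0.
case: (eqVneq i j) => [->|ij]; first by rewrite HB.2 HB'.2.
by have := E i j; rewrite !mxE (negbTE ij) !mulr0n !add0r.
Qed.

Lemma phase_inj v b B v' b' B' : Bset B -> Bset B' ->
  phase v b B =1 phase v' b' B' -> [/\ v' = v, b' = b & B' = B].
Proof.
move=> HB HB' E.
have [eb eB] := diag_add_offdiag_inj HB HB'
  (quad_phase_form_uniq E (quad_phase_phase v b HB) (quad_phase_phase v' b' HB')).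
subst b' B'; split=> //; apply/matrixP => i j; rewrite !ord1; apply: sgn_inj.
have := E (basis i); rewrite !phase_basis => /mulIf -> //.
by rewrite expf_neq0 // neq0Ci.
Qed.

End PhaseNormalForm.

Definition transvection n (i j : 'I_n) : 'M['F_2]_n := 1%:M + delta_mx i j.

Lemma transvectionK n (i j : 'I_n) : i != j ->
  transvection i j *m transvection i j = 1%:M.
Proof.
move=> ij; have DD : delta_mx i j + delta_mx i j = 0 :> 'M['F_2]_n.
  by apply/matrixP => k l; rewrite !mxE addF2xx.
rewrite mulmxDl !mulmxDr !mul1mx mulmx1 mul_delta_mx_cond eq_sym (negbTE ij).
by rewrite mulr0n addr0 -addrA DD addr0.
Qed.

Lemma transvection_unit n (i j : 'I_n) : i != j -> transvection i j \in unitmx.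
Proof. by move=> ij; case: (mulmx1_unit (transvectionK ij)). Qed.

Lemma Bset_CZ n (i j : 'I_n) : i != j -> Bset (delta_mx i j + delta_mx j i).
Proof.
move=> ij; split=> [|k]; first by rewrite raddfD /= !trmx_delta addrC.
by rewrite !mxE; case: (eqVneq k i) => [->|_]; rewrite ?(negbTE ij) ?andbF /= addr0.
Qed.

Section QuadraticMonomials.
Variable n : nat.
Implicit Types (A M : 'M['F_2]_n) (c : bits n -> algC) (U V : op_t n).

Definition quad_monomial A U : Prop :=
  exists c M, [/\ M^T = M, quad_phase c M & U = monop (mulmx A) c].

Lemma quad_monomial1 : quad_monomial 1%:M 1%:M.
Proof.
exists (fun _ => 1), 0; split; rewrite ?trmx0 ?monop_lin1 ?monop1 //.
exact: quad_phase1.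
Qed.

Lemma quad_monomialM A A' U V :
  quad_monomial A U -> quad_monomial A' V -> quad_monomial (A *m A') (U *m V).
Proof.
move=> [c [M [Mt Qc ->]]] [c' [M' [Mt' Qc' ->]]].
exists (fun x => c (A' *m x) * c' x), (A'^T *m M *m A' + M'); split.
- by rewrite raddfD /= Mt' !trmx_mul trmxK Mt mulmxA.
- exact: quad_phaseM (quad_phase_lin A' Qc) Qc'.
- exact: monop_linM.
Qed.

Lemma quad_monomialV A U :
  A \in unitmx -> quad_monomial A U -> quad_monomial (invmx A) (invmx U).
Proof.
move=> uA [c [M [Mt Qc ->]]].
exists (fun x => (c (invmx A *m x))^-1), ((invmx A)^T *m M *m invmx A); split.
- by rewrite !trmx_mul trmxK Mt mulmxA.
- exact: quad_phaseV (quad_phase_lin (invmx A) Qc).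
- exact: invmx_monop_lin (quad_phase_neq0 Qc).
Qed.

Lemma quad_monomial_diag c M :
  M^T = M -> quad_phase c M -> quad_monomial 1%:M (monop id c).
Proof. by move=> Mt Qc; exists c, M; rewrite monop_lin1. Qed.

Lemma quad_monomial_X A : quad_monomial A (Xgate A).
Proof. by exists (fun _ => 1), 0; split; rewrite ?trmx0 //; apply: quad_phase1. Qed.

Lemma quad_monomial_gen U : Gens U -> exists2 A, A \in unitmx & quad_monomial A U.
Proof.
case=> [[i ->]|[[i [j [ij ->]]]|[i [j [ij ->]]]]]; last first.
- by exists (transvection i j); [exact: transvection_unit | exact: quad_monomial_X].
- exists 1%:M; first exact: unitmx1.
  by apply: quad_monomial_diag (proj1 (Bset_CZ ij)) (quad_phase_ZB (Bset_CZ ij)).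
- exists 1%:M; first exact: unitmx1.
  by apply: quad_monomial_diag (tr_diag_mx _) (quad_phase_P _).
Qed.

Lemma Ggrp_quad_monomial U : Ggrp U -> exists2 A, A \in unitmx & quad_monomial A U.
Proof.
elim=> {U} [|U /quad_monomial_gen //|U V _ [A uA QU] _ [A' uA' QV]|U _ [A uA QU]].
- by exists 1%:M; [exact: unitmx1 | exact: quad_monomial1].
- by exists (A *m A'); [rewrite unitmx_mul uA | exact: quad_monomialM].
- by exists (invmx A); [rewrite unitmx_inv | exact: quad_monomialV].
Qed.

End QuadraticMonomials.

Lemma gen_sub n (S T : op_t n -> Prop) U : (forall V, S V -> T V) -> gen S U -> gen T U.
Proof.
move=> ST; elim=> {U} [|U /ST|U V _ HU _ HV|U _ HU]; last exact: gen_inv.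
- exact: gen_one.
- exact: gen_base.
- exact: gen_mul.
Qed.

Section DiagonalGroup.
Variable n : nat.
Implicit Types (v b : bits n) (B : 'M['F_2]_n) (U : op_t n).

Lemma monop_id_prod (I : Type) (r : seq I) (P : pred I) (F : I -> bits n -> algC) :
  monop id (fun x => \prod_(i <- r | P i) F i x) =
  \big[mulmx/1%:M]_(i <- r | P i) monop id (F i).
Proof.
elim: r => [|a r IH]; first by rewrite big_nil -monop1; apply: eq_monop => x; rewrite ?big_nil.
rewrite big_cons -IH; case: ifP => Pa; last by apply: eq_monop => x; rewrite ?big_cons ?Pa.
by rewrite monop_mul; apply: eq_monop => x; rewrite ?big_cons ?Pa.
Qed.

Lemma Pgate_prod b : Pgate b = \big[mulmx/1%:M]_(i | b i ord0 == 1) Pi i.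
Proof.
rewrite PgateE -monop_id_prod; apply: eq_monop => x //=.
rewrite Pph_prod (bigID (fun i => b i ord0 == 1)) /= [X in _ * X]big1 ?mulr1 => [|i].
  by apply: eq_bigr => i /eqP bi; rewrite -[RHS]/(Pph (basis i) x) Pph_basis_l /bit bi mul1n.
by rewrite /bit; case: (F2P (b i ord0)) => -> // _; rewrite mul0n.
Qed.

Lemma Zgate_Pgate_sq v : Zgate v = Pgate v *m Pgate v.
Proof.
rewrite PgateE monop_mul ZgateE; apply: eq_monop => x //=.
by rewrite /Zph /Pph -exprMn -expr2 sqrCi.
Qed.

Lemma CZ_phase (i j : 'I_n) x : (i < j)%N ->
  ZBph (delta_mx i j + delta_mx j i) x = (-1) ^+ (bit x i * bit x j).
Proof.
move=> lt_ij; have ij : i != j by rewrite neq_ltn lt_ij.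
rewrite ZBph_sgn expN1_sgn natrM !natr_Zp /qform (bigD1 i) //= (bigD1 j) //=.
rewrite big1 ?addr0 => [|l /andP [_ lj]]; last first.
  by rewrite !mxE eqxx (negbTE lj) (negbTE ij) /= addr0 !mul0r.
rewrite [X in _ + X]big1 ?addr0 => [|k ki]; last first.
  rewrite big1 // => l lt_kl; rewrite !mxE (negbTE ki) /= add0r.
  case: (eqVneq k j) => [kj|_]; last by rewrite /= !mul0r.
  case: (eqVneq l i) => [li|_]; last by rewrite /= !mul0r.
  by move: lt_kl; rewrite kj li ltnNge ltnW.
by rewrite !mxE !eqxx (negbTE ij) eq_sym (negbTE ij) /= addr0 mul1r.
Qed.

Lemma ZBgate_prod B : Bset B ->
  ZBgate B = \big[mulmx/1%:M]_(p : 'I_n * 'I_n | (p.1 < p.2)%N && (B p.1 p.2 == 1))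
               CZ p.1 p.2.
Proof.
move=> HB; rewrite ZBgateE -monop_id_prod; apply: eq_monop => x //=.
rewrite /ZBph (big_morph _ (exprD _) (expr0 _)).
under eq_bigr => i _ do rewrite (big_morph _ (exprD _) (expr0 _)).
rewrite pair_big_dep (bigID (fun p => B p.1 p.2 == 1)) /= [X in _ * X]big1 ?mulr1.
  apply: eq_bigr => p /andP [lt_p /eqP Bp].
  by rewrite -[RHS]/(ZBph (delta_mx p.1 p.2 + delta_mx p.2 p.1) x) CZ_phase // Bp mul1n.
by move=> p /andP [_]; case: (F2P (B p.1 p.2)) => ->.
Qed.

Lemma Ngrp_Pgate b : Ngrp (Pgate b).
Proof.
rewrite Pgate_prod; apply: big_ind => [|U V|i _]; [exact: gen_one | exact: gen_mul |].
by apply: gen_base; left; exists i.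
Qed.

Lemma Ngrp_Zgate v : Ngrp (Zgate v).
Proof. by rewrite Zgate_Pgate_sq; apply: gen_mul; apply: Ngrp_Pgate. Qed.

Lemma Ngrp_ZBgate B : Bset B -> Ngrp (ZBgate B).
Proof.
move=> HB; rewrite ZBgate_prod //.
apply: big_ind => [|U V|p /andP [lt_p _]]; [exact: gen_one | exact: gen_mul |].
by apply: gen_base; right; exists p.1, p.2; rewrite neq_ltn lt_p.
Qed.

Lemma Ngrp_phase v b B : Bset B -> Ngrp (Zgate v *m Pgate b *m ZBgate B).
Proof.
move=> HB; apply: gen_mul (Ngrp_ZBgate HB).
exact: gen_mul (Ngrp_Zgate v) (Ngrp_Pgate b).
Qed.

Lemma Ngrp_quad_monomial U : Ngrp U -> quad_monomial 1%:M U.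
Proof.
elim=> {U} [|U [[i ->]|[i [j [ij ->]]]]|U V _ HU _ HV|U _ HU].
- exact: quad_monomial1.
- exact: quad_monomial_diag (tr_diag_mx _) (quad_phase_P _).
- exact: quad_monomial_diag (proj1 (Bset_CZ ij)) (quad_phase_ZB (Bset_CZ ij)).
- by rewrite -[1%:M]mulmx1; apply: quad_monomialM.
- by rewrite -invmx1; apply: quad_monomialV; rewrite ?unitmx1.
Qed.

Lemma quad_monomial_Ngrp U : quad_monomial 1%:M U -> Ngrp U.
Proof.
move=> [c [M [Mt Qc ->]]]; have [v [b [B [HB Ec]]]] := quad_phase_normal_form Mt Qc.
suff -> : monop (mulmx 1%:M) c = Zgate v *m Pgate b *m ZBgate B by exact: Ngrp_phase.
by rewrite monop_lin1 ZgateE PgateE ZBgateE !monop_mul; apply: eq_monop => x //; rewrite Ec.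
Qed.

End DiagonalGroup.

Lemma delta_mulmxE n (a b : 'I_n) (C : 'M['F_2]_n) l m :
  (delta_mx a b *m C) l m = (l == a)%:R * C b m.
Proof.
rewrite mxE (bigD1 b) //= big1 ?addr0 => [|p /negbTE pb]; first by rewrite mxE eqxx andbT.
by rewrite mxE pb andbF mul0r.
Qed.

Section TransvectionGeneration.
Variables (n : nat) (P : 'M['F_2]_n -> Prop).
Hypotheses (P1 : P 1%:M) (PM : forall A B, P A -> P B -> P (A *m B))
  (PV : forall A, A \in unitmx -> P A -> P (invmx A))
  (PT : forall i j : 'I_n, i != j -> P (transvection i j)).
Implicit Types (A B C : 'M['F_2]_n).

Let PU A := P A /\ A \in unitmx.

Let PU1 : PU 1%:M. Proof. by split; rewrite ?unitmx1. Qed.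

Let PUM A B : PU A -> PU B -> PU (A *m B).
Proof. by move=> [PA uA] [PB uB]; split; [exact: PM | rewrite unitmx_mul uA]. Qed.

Let PUT i j : i != j -> PU (transvection i j).
Proof. by move=> ij; split; [exact: PT | exact: transvection_unit]. Qed.

Definition leading_cols_id k (A : 'M['F_2]_n) :=
  forall i (j : 'I_n), (j < k)%N -> A i j = (i == j)%:R.

Lemma col_clear_PU kk (u : 'I_n -> 'F_2) (r : seq 'I_n) :
  PU (1%:M + \sum_(i <- r | i != kk) u i *: delta_mx i kk).
Proof.
elim: r => [|a r IH]; first by rewrite big_nil addr0.
rewrite big_cons; case: (eqVneq a kk) => [//|a_kk] /=.
set S := \sum_(i <- r | i != kk) u i *: delta_mx i kk.
have -> : 1%:M + (u a *: delta_mx a kk + S) = (1%:M + u a *: delta_mx a kk) *m (1%:M + S).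
  have cross : u a *: delta_mx a kk *m S = 0.
    rewrite mulmx_sumr big1_seq // => i /andP [i_kk _].
    by rewrite -scalemxAl -scalemxAr mul_delta_mx_0 ?scaler0 // eq_sym.
  by rewrite mulmxDl !mulmxDr !mul1mx mulmx1 cross addr0 [RHS]addrAC -addrA.
case: (F2P (u a)) => ->; first by rewrite scale0r addr0 mul1mx.
by rewrite scale1r; apply: PUM IH; apply: PUT.
Qed.

Lemma col_clear_entry kk (u : 'I_n -> 'F_2) C l m :
  ((1%:M + \sum_(i | i != kk) u i *: delta_mx i kk) *m C) l m =
  C l m + (if l != kk then u l * C kk m else 0).
Proof.
rewrite mulmxDl mul1mx mulmx_suml mxE summxE; congr (_ + _).
under eq_bigr => i _ do rewrite -scalemxAl mxE delta_mulmxE.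
case: (eqVneq l kk) => [->|l_kk] /=.
  by rewrite big1 // => i /negbTE i_kk; rewrite eq_sym i_kk mul0r mulr0.
rewrite (bigD1 l) //= big1 ?addr0 => [|i /andP [_ /negbTE li]]; first by rewrite eqxx mul1r.
by rewrite eq_sym li mul0r mulr0.
Qed.

(* Otherwise column [k] is a combination of the first [k] columns, and [w]
   below is a nonzero vector in the kernel of [A]. *)
Lemma pivot_exists k (lt_kn : (k < n)%N) A : A \in unitmx -> leading_cols_id k A ->
  exists2 r : 'I_n, (k <= r)%N & A r (Ordinal lt_kn) = 1.
Proof.
move=> uA HA; set kk := Ordinal lt_kn.
have [/existsP [r /andP [kr /eqP Ar]]|/existsPn no_pivot] :=
  boolP [exists r : 'I_n, (k <= r)%N && (A r kk == 1)]; first by exists r.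
have A0 (r : 'I_n) : (k <= r)%N -> A r kk = 0.
  by move=> kr; have := no_pivot r; rewrite kr /=; case: (F2P (A r kk)) => ->.
pose w : 'cV['F_2]_n := \col_l (if (l < k)%N then A l kk else (l == kk)%:R).
have Aw : A *m w = 0.
  apply/matrixP => i j; rewrite [j]ord1 !mxE (bigD1 kk) //= mxE ltnn eqxx mulr1.
  have term l : l != kk -> A i l * w l ord0 = (l == i)%:R * (if (i < k)%N then A i kk else 0).
    move=> l_kk; rewrite mxE (negbTE l_kk) /=.
    case: (ltnP l k) => lk; [rewrite (HA i l lk) | rewrite mulr0];
      case: (eqVneq l i) => [<-|li]; rewrite ?eqxx ?mul1r ?mul0r ?mulr0 //.
      by rewrite lk.
    by rewrite ltnNge lk.
  rewrite (eq_bigr _ term); case: (eqVneq i kk) => [->|i_kk].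
    by rewrite ltnn big1 ?addr0 ?A0 // => l _; rewrite mulr0.
  rewrite (bigD1 i) //= big1 ?addr0 => [|l /andP [_ /negbTE ->]]; last by rewrite mul0r.
  by rewrite eqxx mul1r; case: ltnP => ik; rewrite ?addF2xx ?addr0 ?A0.
have : w = 0 by rewrite -[w]mul1mx -(mulVmx uA) -mulmxA Aw mulmx0.
by move/matrixP/(_ kk ord0); rewrite !mxE ltnn eqxx.
Qed.

Lemma pivot_normalize k (lt_kn : (k < n)%N) A : A \in unitmx -> leading_cols_id k A ->
  exists2 T, PU T &
    leading_cols_id k (T *m A) /\ (T *m A) (Ordinal lt_kn) (Ordinal lt_kn) = 1.
Proof.
move=> uA HA; set kk := Ordinal lt_kn.
case: (F2P (A kk kk)) => Akk; last by exists 1%:M; rewrite ?mul1mx.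
have [r kr Ar] := pivot_exists lt_kn uA HA.
have kk_r : kk != r by apply: contra_eq_neq Ar => <-; rewrite Akk.
exists (transvection kk r); first exact: PUT.
rewrite /transvection mulmxDl mul1mx; split=> [i j lt_jk|]; rewrite mxE delta_mulmxE.
  have rj : (r == j) = false by apply/negbTE; rewrite neq_ltn (leq_trans lt_jk kr) orbT.
  by rewrite (HA i j lt_jk) (HA r j lt_jk) rj mulr0 addr0.
by rewrite Akk Ar eqxx mul1r add0r.
Qed.

Lemma column_clear k (lt_kn : (k < n)%N) C :
  leading_cols_id k C -> C (Ordinal lt_kn) (Ordinal lt_kn) = 1 ->
  exists2 L, PU L & leading_cols_id k.+1 (L *m C).
Proof.
move=> HC Ckk; set kk := Ordinal lt_kn.
exists (1%:M + \sum_(i | i != kk) C i kk *: delta_mx i kk); first exact: col_clear_PU.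
move=> i j; rewrite ltnS leq_eqVlt col_clear_entry => /orP [/eqP jk|lt_jk].
  have -> : j = kk by apply: val_inj.
  by rewrite Ckk mulr1; case: (eqVneq i kk) => [->|_] /=; rewrite ?addr0 ?addF2xx.
rewrite HC // (HC kk j) // (_ : (kk == j) = false) ?mulr0 ?if_same ?addr0 //.
by apply/negbTE; rewrite neq_ltn lt_jk orbT.
Qed.

Lemma gaussian_elimination k : (k <= n)%N -> forall A, A \in unitmx ->
  exists2 L, PU L & leading_cols_id k (L *m A).
Proof.
elim: k => [_ A uA|k IH lt_kn A uA]; first by exists 1%:M; first exact: PU1.
have [L PUL HL] := IH (ltnW lt_kn) A uA.
have uLA : L *m A \in unitmx by rewrite unitmx_mul PUL.2.
have [T PUT' [HT Tkk]] := pivot_normalize lt_kn uLA HL.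
have [L' PUL' HL'] := column_clear HT Tkk.
exists (L' *m (T *m L)); first by apply: PUM PUL' (PUM PUT' PUL).
by rewrite -!mulmxA.
Qed.

Lemma unitmx_transvection_gen A : A \in unitmx -> P A.
Proof.
move=> uA; have [L [PL uL] HL] := gaussian_elimination (leqnn n) uA.
have LA1 : L *m A = 1%:M by apply/matrixP => i j; rewrite HL // mxE.
by rewrite -[A]mul1mx -(mulVmx uL) -mulmxA LA1 mulmx1; apply: PV.
Qed.

End TransvectionGeneration.

Section LinearGroup.
Variable n : nat.
Implicit Types (A : 'M['F_2]_n) (U : op_t n).

Lemma Xgate_mul A A' : Xgate A *m Xgate A' = Xgate (A *m A').
Proof. by rewrite /Xgate monop_linM; apply: eq_monop => x //=; rewrite mulr1. Qed.

Lemma Xgate1 : Xgate 1%:M = 1%:M :> op_t n.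
Proof. by rewrite /Xgate monop_lin1 monop1. Qed.

Lemma Xgate_inv A : A \in unitmx -> invmx (Xgate A) = Xgate (invmx A).
Proof.
move=> uA; rewrite /Xgate invmx_monop_lin // => [|x]; last exact: oner_neq0.
by apply: eq_monop => x //=; rewrite invr1.
Qed.

Lemma Xgrp_Xgate U : Xgrp U -> exists2 A, A \in unitmx & U = Xgate A.
Proof.
elim=> {U} [|U [i [j [ij ->]]]|U V _ [A uA ->] _ [A' uA' ->]|U _ [A uA ->]].
- by exists 1%:M; rewrite ?unitmx1 ?Xgate1.
- by exists (transvection i j); first exact: transvection_unit.
- by exists (A *m A'); rewrite ?unitmx_mul ?uA ?Xgate_mul.
- by exists (invmx A); rewrite ?unitmx_inv ?Xgate_inv.
Qed.

Lemma Xgate_Xgrp A : A \in unitmx -> Xgrp (Xgate A).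
Proof.
apply: (@unitmx_transvection_gen n (fun A => Xgrp (Xgate A))) => [|B C|B uB|i j ij].
- by rewrite Xgate1; apply: gen_one.
- by rewrite -Xgate_mul; apply: gen_mul.
- by rewrite -Xgate_inv //; apply: gen_inv.
- by apply: gen_base; exists i, j.
Qed.

End LinearGroup.

Section NormalForm.
Variable n : nat.
Implicit Types (v b : bits n) (A B : 'M['F_2]_n) (U : op_t n).

Definition nf v b B A : op_t n := Zgate v *m Pgate b *m ZBgate B *m Xgate A.

Lemma nfE v b B A : nf v b B A = monop (mulmx A) (fun x => phase v b B (A *m x)).
Proof.
rewrite /nf ZgateE PgateE ZBgateE /Xgate !monop_mul.
by apply: eq_monop => x //=; rewrite mulr1.
Qed.

Lemma Ggrp_nf U : Ggrp U -> exists v b B A, [/\ Bset B, A \in unitmx & U = nf v b B A].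
Proof.
move=> /Ggrp_quad_monomial [A uA [c [M [Mt Qc ->]]]].
have Mt' : ((invmx A)^T *m M *m invmx A)^T = (invmx A)^T *m M *m invmx A.
  by rewrite !trmx_mul trmxK Mt mulmxA.
have [v [b [B [HB Ec]]]] := quad_phase_normal_form Mt' (quad_phase_lin (invmx A) Qc).
exists v, b, B, A; split=> //; rewrite nfE; apply: eq_monop => x //=.
by rewrite -Ec mulKmx.
Qed.

Lemma nf_inj v b B A v' b' B' A' : Bset B -> Bset B' -> A \in unitmx ->
  nf v b B A = nf v' b' B' A' -> [/\ v' = v, b' = b, B' = B & A' = A].
Proof.
move=> HB HB' uA; rewrite !nfE => /monop_inj E.
have {}E := E (fun x => quad_phase_neq0 (quad_phase_phase v b HB) (A *m x)).
have eA : A' = A.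
  apply/matrixP => i j; have := congr1 (fun w : bits n => w i ord0) (E (basis j)).1.
  by rewrite /basis -!colE !mxE.
subst A'; have Ephase : phase v b B =1 phase v' b' B'.
  by move=> y; have := (E (invmx A *m y)).2; rewrite mulKVmx.
by have [-> -> ->] := phase_inj HB HB' Ephase.
Qed.

Lemma Ngrp_Ggrp U : Ngrp U -> Ggrp U.
Proof. by apply: gen_sub => V HV; case: HV; [left | right; left]. Qed.

Lemma Xgrp_Ggrp U : Xgrp U -> Ggrp U.
Proof. by apply: gen_sub => V HV; right; right. Qed.

Lemma nf_Ggrp v b B A : Bset B -> A \in unitmx -> Ggrp (nf v b B A).
Proof.
move=> HB uA; apply: gen_mul; first exact/Ngrp_Ggrp/Ngrp_phase.
exact/Xgrp_Ggrp/Xgate_Xgrp.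
Qed.

Lemma Ggrp_semidirect : semidirect (@Ggrp n) (@Ngrp n) (@Xgrp n).
Proof.
split; [exact: Ngrp_Ggrp | exact: Xgrp_Ggrp | | |].
- move=> g U /Ggrp_quad_monomial [A uA Qg] /Ngrp_quad_monomial QU; apply: quad_monomial_Ngrp.
  rewrite -(mulVmx uA) -[invmx A]mulmx1.
  exact: quad_monomialM (quad_monomialM (quad_monomialV uA Qg) QU) Qg.
- move=> U /Ngrp_quad_monomial [c [M [_ Qc ->]]] /Xgrp_Xgate [A _ /monop_inj E].
  rewrite -monop1; apply: eq_monop => x /=; first by rewrite mul1mx.
  exact: (E (quad_phase_neq0 Qc) x).2.
- move=> g /Ggrp_nf [v [b [B [A [HB uA ->]]]]].
  exists (Zgate v *m Pgate b *m ZBgate B), (Xgate A).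
  by split; [exact: Ngrp_phase | exact: Xgate_Xgrp |].
Qed.

End NormalForm.

Lemma card_bits n : #|{: bits n}| = (2 ^ n)%N.
Proof. by rewrite card_mx card_Fp // muln1. Qed.

Lemma card_unitmx_F2 n : #|[set A : 'M['F_2]_n | A \in unitmx]| =
  (2 ^ 'C(n, 2) * \prod_(1 <= i < n.+1) (2 ^ i - 1))%N.
Proof.
case: n => [|m].
  rewrite big_geq // muln1 (_ : [set A | _] = setT) ?cardsT ?card_mx ?bin_small //.
  by apply/setP => A; rewrite !inE (_ : A = 1%:M) ?unitmx1 // !flatmx0.
have := card_GL 'F_2 (ltn0Sn m); rewrite card_Fp // => <-.
by rewrite cardsT card_sub; apply: eq_card => A; rewrite !inE.
Qed.

Definition upper_pairs n := {p : 'I_n * 'I_n | (p.1 < p.2)%N}.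

Lemma card_upper_pairs n : #|{: upper_pairs n}| = 'C(n, 2).
Proof.
rewrite card_sig -sum1_card (eq_bigl (fun p : 'I_n * 'I_n => true && (p.1 < p.2)%N)) //.
rewrite -(pair_big_dep xpredT (fun i j : 'I_n => (i < j)%N) (fun _ _ => 1%N)) /=.
rewrite (exchange_big_dep xpredT) //= -bin2_sum big_mkord; apply: eq_bigr => j _.
rewrite -(big_ord_widen_cond _ (fun _ => true) (fun _ => 1%N) (ltnW (ltn_ord j))).
by rewrite sum1_card card_ord.
Qed.

Definition Bsetb n (B : 'M['F_2]_n) : bool := (B^T == B) && [forall i, B i i == 0].

Lemma BsetP n (B : 'M['F_2]_n) : reflect (Bset B) (Bsetb B).
Proof.
apply: (iffP andP) => [[/eqP Bt /forallP Bd]|[Bt Bd]]; first by split=> // i; apply/eqP.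
by split; [apply/eqP | apply/forallP => i; apply/eqP].
Qed.

Section SymmetricFromUpper.
Variable n : nat.
Implicit Types (f : {ffun upper_pairs n -> 'F_2}) (B : 'M['F_2]_n).

Definition upper_ext f (p : 'I_n * 'I_n) : 'F_2 :=
  if insub p is Some q then f q else 0.

(* At most one of [(i, j)] and [(j, i)] is an upper pair, so [sym_of_upper f]
   is symmetric with zero diagonal by construction. *)
Definition sym_of_upper f : 'M['F_2]_n :=
  \matrix_(i, j) (upper_ext f (i, j) + upper_ext f (j, i)).

Lemma upper_ext_lt f (i j : 'I_n) (lt_ij : (i < j)%N) :
  upper_ext f (i, j) = f (Sub (i, j) lt_ij).
Proof. by rewrite /upper_ext (@insubT _ _ (upper_pairs n) (i, j) lt_ij). Qed.

Lemma upper_ext_ge f (i j : 'I_n) : (j <= i)%N -> upper_ext f (i, j) = 0.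
Proof. by move=> le_ji; rewrite /upper_ext insubF //= ltnNge le_ji. Qed.

Lemma Bset_sym_of_upper f : Bset (sym_of_upper f).
Proof.
split=> [|i]; last by rewrite mxE addF2xx.
by apply/matrixP => i j; rewrite !mxE addrC.
Qed.

Lemma sym_of_upper_inj : injective sym_of_upper.
Proof.
move=> f g /matrixP E; apply/ffunP => -[[i j] lt_ij]; have := E i j.
rewrite !mxE (upper_ext_lt f lt_ij) (upper_ext_lt g lt_ij).
by rewrite !upper_ext_ge ?(ltnW lt_ij) // !addr0.
Qed.

Lemma sym_of_upperK B :
  Bset B -> sym_of_upper [ffun p : upper_pairs n => B (val p).1 (val p).2] = B.
Proof.
move=> HB; apply/matrixP => i j; rewrite mxE.
case: (ltngtP i j) => [lt_ij|lt_ji|/val_inj ->]; last by rewrite addF2xx HB.2.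
- by rewrite (upper_ext_lt _ lt_ij) upper_ext_ge ?(ltnW lt_ij) // addr0 ffunE.
- by rewrite (upper_ext_lt _ lt_ji) upper_ext_ge ?(ltnW lt_ji) // add0r ffunE Bset_sym.
Qed.

Lemma card_Bset : #|[set B : 'M['F_2]_n | Bsetb B]| = (2 ^ 'C(n, 2))%N.
Proof.
have -> : [set B : 'M['F_2]_n | Bsetb B] = sym_of_upper @: setT.
  apply/setP => B; rewrite inE; apply/BsetP/imsetP => [HB|[f _ ->]].
    by exists [ffun p : upper_pairs n => B (val p).1 (val p).2]; rewrite ?sym_of_upperK.
  exact: Bset_sym_of_upper.
by rewrite card_imset ?cardsT ?card_ffun ?card_Fp ?card_upper_pairs //; exact: sym_of_upper_inj.
Qed.

End SymmetricFromUpper.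

Lemma mul_succ_bin2 n : (n * n.+1 = n + n + 'C(n, 2) + 'C(n, 2))%N.
Proof. by elim: n => [//|n IH]; rewrite binS bin1; nia. Qed.

Lemma Ggrp_enum n : exists s : seq (op_t n),
  [/\ uniq s, size s = (2 ^ (n * n.+1) * \prod_(1 <= i < n.+1) (2 ^ i - 1))%N
    & forall U, Ggrp U <-> U \in s].
Proof.
pose D := setX (setX [set: bits n] [set: bits n])
               (setX [set B : 'M['F_2]_n | Bsetb B] [set A : 'M['F_2]_n | A \in unitmx]).
pose F (t : (bits n * bits n) * ('M['F_2]_n * 'M['F_2]_n)) := nf t.1.1 t.1.2 t.2.1 t.2.2.
exists [seq F t | t <- enum D]; split.
- rewrite map_inj_in_uniq ?enum_uniq // => -[[v b] [B A]] [[v' b'] [B' A']].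
  rewrite !mem_enum !inE /= => /andP [/BsetP HB uA] /andP [/BsetP HB' _].
  by rewrite /F /= => /(nf_inj HB HB' uA) [-> -> -> ->].
- rewrite size_map -cardE !cardsX !cardsT !card_bits card_Bset card_unitmx_F2.
  by rewrite mul_succ_bin2 !expnD; ring.
- move=> U; split=> [/Ggrp_nf [v [b [B [A [HB uA ->]]]]]|/mapP [[[v b] [B A]]]].
    by apply/mapP; exists ((v, b), (B, A)); rewrite // mem_enum !inE /= uA andbT; apply/BsetP.
  by rewrite mem_enum !inE /= => /andP [/BsetP HB uA] ->; apply: nf_Ggrp.
Qed.

Theorem theorem3p2 (n : nat) :
  [/\ (forall U : op_t n, Ggrp U ->
        exists (v b : bits n) (B A : 'M['F_2]_n),
          [/\ Bset B, A \in unitmx,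
              U = Zgate v *m Pgate b *m ZBgate B *m Xgate A
            & forall (v' b' : bits n) (B' A' : 'M['F_2]_n), Bset B' -> A' \in unitmx ->
                U = Zgate v' *m Pgate b' *m ZBgate B' *m Xgate A' ->
                [/\ v' = v, b' = b, B' = B & A' = A]]),
      semidirect (@Ggrp n) (@Ngrp n) (@Xgrp n)
    & exists s : seq (op_t n),
        [/\ uniq s,
            size s = (2 ^ (n * n.+1) * \prod_(1 <= i < n.+1) (2 ^ i - 1))%N
          & forall U : op_t n, Ggrp U <-> U \in s]].
Proof.
split; [|exact: Ggrp_semidirect|exact: Ggrp_enum].
move=> U /Ggrp_nf [v [b [B [A [HB uA EU]]]]].
exists v, b, B, A; split=> // v' b' B' A' HB' _ EU'.
by apply: nf_inj HB HB' uA _; rewrite -EU.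
Qed.
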